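(* Consider the mixed support-set model described in the context, and let $\mathsf p,\mathsf q_1,\dots,\mathsf q_h,\mathsf r_1,\dots,\mathsf r_m$ be $1+h+m$ distinct sensors. Then (whenever the conditioning event has positive probability) $\Pr\Big(i\in\mathcal T_{\mathsf p}\ \Big|\ i\in\hat{\mathcal T}_{\mathsf p},\ i\in\bigcap_{l=1}^{h}\hat{\mathcal T}_{\mathsf q_l},\ i\in\bigcap_{l=1}^{m}\hat{\mathcal T}_{\mathsf r_l}^{\complement}\Big)$ equals, writing $\phi=\frac{T}{N-T}\epsilon$, $$\frac{(1-\epsilon)^{h+1}\epsilon^{m}\frac{J}{N}+(1-\epsilon)\phi^{h}(1-\phi)^{m}\frac{I}{N}}{(1-\epsilon)^{h+1}\epsilon^{m}\frac{J}{N}+(h+1)(1-\epsilon)\phi^{h}(1-\phi)^{m}\frac{I}{N}+m\,\epsilon\,\phi^{h+1}(1-\phi)^{m-1}\frac{I}{N}+\phi^{h+1}(1-\phi)^{m}\frac{N-J-(m+h+1)I}{N}}.$$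
   Context: Let $N>T\ge1$ be integers and $\Omega=\{1,\dots,N\}$; complements are taken in $\Omega$. A finite set $\mathcal L$ of sensors is given. Mixed support-set model: there are a fixed set $\mathcal J\subseteq\Omega$ with $|\mathcal J|=J$ and, for each sensor $\mathsf p\in\mathcal L$, a fixed set $\mathcal I_{\mathsf p}\subseteq\Omega$ with $|\mathcal I_{\mathsf p}|=I$, such that $\mathcal I_{\mathsf p}\cap\mathcal J=\emptyset$ for all $\mathsf p$, $\mathcal I_{\mathsf p}\cap\mathcal I_{\mathsf q}=\emptyset$ for $\mathsf p\ne\mathsf q$, and the true support set of sensor $\mathsf p$ is $\mathcal T_{\mathsf p}=\mathcal I_{\mathsf p}\cup\mathcal J$; thus $T=I+J$. Each sensor has a random estimated support set $\hat{\mathcal T}_{\mathsf p}\subseteq\Omega$. A random index $i$ is uniformly distributed on $\Omega$ and independent of all estimates. System model: there is $\epsilon$ with $0\le\epsilon\le (N-T)/N$, common to all sensors, such that for every sensor $\mathsf p$ and every $j\in\Omega$, $\Pr(j\in\hat{\mathcal T}_{\mathsf p})=1-\epsilon$ if $j\in\mathcal T_{\mathsf p}$ and $\Pr(j\in\hat{\mathcal T}_{\mathsf p})=\frac{T}{N-T}\epsilon$ if $j\notin\mathcal T_{\mathsf p}$ (so $\Pr(i\in\hat{\mathcal T}_{\mathsf p})=T/N$, detection probability $1-\epsilon$, miss probability $\epsilon$, false-alarm probability $\frac{T}{N-T}\epsilon$). For each fixed $j\in\Omega$, the events $\{j\in\hat{\mathcal T}_{\mathsf p}\}$, $\mathsf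 p\in\mathcal L$, are mutually independent. Convention: $0^0=1$ and a term with coefficient $0$ is $0$. *)

From HB Require Import structures.
From mathcomp Require Import all_boot all_order all_algebra.
From mathcomp Require Import all_classical all_reals all_analysis.
Set Implicit Arguments. Unset Strict Implicit. Unset Printing Implicit Defensive.
Import Order.TTheory GRing.Theory Num.Theory.
Local Open Scope classical_set_scope.
Local Open Scope ring_scope.

Definition prob (d : measure_display) (Omega : measurableType d) (R : realType)
  (P : probability Omega R) (A : set Omega) : R := fine (P A).

Definition cond_prob (d : measure_display) (Omega : measurableType d) (R : realType)
  (P : probability Omega R) (A B : set Omega) : R :=
  prob P (A `&` B) / prob P B.

Definition mutually_independent (d : measure_display) (Omega : measurableType d)
  (R : realType) (P : probability Omega R) (K : finType) (E : K -> set Omega) : Prop :=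
  forall S : {set K},
    prob P [set w | forall k, k \in S -> E k w] = \prod_(k in S) prob P (E k).

(* Conditioning on the uniform index i = j, which is independent of the
   estimates, reduces the problem to a single index j.  By the independence of
   the sensors at j, the probability that p and every q_l detect j while every
   r_l misses it is a product of detection and miss probabilities, and it only
   depends on whether j lies in J, in I_p or some I_(q l), in some I_(r l), or
   in none of these supports.  There are J, (h+1) I, m I and N - J - (m+h+1) I
   indices of these four kinds, and averaging over j gives the numerator
   (only the indices of I_p and J count there) and the denominator. *)

From HB Require Import structures.
From mathcomp Require Import all_boot all_order all_algebra.
From mathcomp Require Import all_classical all_reals all_analysis.
From mathcomp Require Import ring.
Import Order.TTheory GRing.Theory Num.Theory.
Local Open Scope classical_set_scope.
Local Open Scope ring_scope.

Section RealProbability.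
Context {d : measure_display} {Omega : measurableType d} {R : realType}
  (P : probability Omega R).
Implicit Types A B : set Omega.

Lemma prob0 : prob P set0 = 0.
Proof. by rewrite /prob measure0. Qed.

Lemma probU A B : measurable A -> measurable B -> A `&` B = set0 ->
  prob P (A `|` B) = prob P A + prob P B.
Proof. by move=> mA mB AB0; rewrite /prob measureU // fineD // fin_num_measure. Qed.

Lemma probD A B : measurable A -> measurable B ->
  prob P (A `\` B) = prob P A - prob P (A `&` B).
Proof.
move=> mA mB; have mAB := measurableI _ _ mA mB.
rewrite /prob measureD ?fineB ?fin_num_measure //.
by rewrite ltey_eq fin_num_measure.
Qed.

Lemma probC A : measurable A -> prob P (~` A) = 1 - prob P A.
Proof. by move=> mA; rewrite /prob probability_setC // fineB ?fin_num_measure. Qed.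

Lemma measurable_forall_in {K : finType} (S : {set K}) (E : K -> set Omega) :
  (forall k, measurable (E k)) -> measurable [set w | forall k, k \in S -> E k w].
Proof. by move=> mE; apply: (fin_bigcap_measurable finite_finset) => k _. Qed.

Lemma ffun_fiberE {K T : finType} (X : K -> Omega -> T) (f : {ffun K -> T}) :
  [set w | [ffun k => X k w] = f] = [set w | forall k, X k w = f k].
Proof.
apply/funext => w; apply/propext; split => [<- k|Xf]; first by rewrite ffunE.
by apply/ffunP => k; rewrite ffunE.
Qed.

Lemma measurable_ffun_fiber {K T : finType} (X : K -> Omega -> T) :
  (forall k t, measurable [set w | X k w = t]) ->
  forall f : {ffun K -> T}, measurable [set w | [ffun k => X k w] = f].
Proof.
move=> mX f; rewrite ffun_fiberE.
suff -> : [set w | forall k, X k w = f k] = \bigcap_(k in setT) [set w | X k w = f k].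
  by apply: (fin_bigcap_measurable finite_finset) => k _.
by apply/seteqP; split=> [w Xw k _ | w Xw k]; [exact: Xw | apply: Xw].
Qed.

Section DiscreteRandomVariable.
Context {Y : finType} {Z : Omega -> Y}.
Hypothesis mZ : forall y, measurable [set w | Z w = y].

Lemma measurable_preimage (A : pred Y) : measurable [set w | A (Z w)].
Proof.
suff -> : [set w | A (Z w)] = \bigcup_(y in [set y | A y]) [set w | Z w = y].
  by apply: (fin_bigcup_measurable finite_finset) => y _.
by apply/seteqP; split=> [w Aw | w [y Ay /= ->]] //; exists (Z w).
Qed.

Lemma prob_preimage_seq (s : seq Y) : uniq s ->
  prob P [set w | Z w \in s] = \sum_(y <- s) prob P [set w | Z w = y].
Proof.
elim: s => [_|y s IH /= /andP[ys us]].
  rewrite big_nil -prob0; congr (prob P _).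
  by apply/seteqP; split=> w //=; rewrite in_nil.
rewrite big_cons -IH //.
have -> : [set w | Z w \in y :: s] = [set w | Z w = y] `|` [set w | Z w \in s].
  apply/seteqP; split=> w /=; rewrite in_cons.
    by case/orP=> [/eqP|]; [left | right].
  by case=> [->|Zs]; rewrite ?eqxx ?Zs ?orbT.
apply: probU => //; first exact: (measurable_preimage (mem s)).
by apply/seteqP; split=> w //= [-> ys']; move: ys; rewrite ys'.
Qed.

Lemma prob_preimage (A : pred Y) :
  prob P [set w | A (Z w)] = \sum_(y | A y) prob P [set w | Z w = y].
Proof.
rewrite -big_filter -prob_preimage_seq ?filter_uniq ?index_enum_uniq //.
by congr (prob P _); apply/funext => w /=; rewrite mem_filter mem_index_enum andbT.
Qed.

End DiscreteRandomVariable.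

Section IndependentDiscreteRandomVariables.
Context {X Y : finType} {U : Omega -> X} {V : Omega -> Y}.
Hypotheses (mU : forall x, measurable [set w | U w = x])
  (mV : forall y, measurable [set w | V w = y]).
Hypothesis UV_indep : forall x y,
  prob P ([set w | U w = x] `&` [set w | V w = y]) =
  prob P [set w | U w = x] * prob P [set w | V w = y].

Lemma prob_preimage_indep (C : X -> pred Y) :
  prob P [set w | C (U w) (V w)] =
  \sum_x prob P [set w | U w = x] * prob P [set w | C x (V w)].
Proof.
have UV_fiber z : [set w | (U w, V w) = z] = [set w | U w = z.1] `&` [set w | V w = z.2].
  by case: z => x y; apply/seteqP; split=> w /= => [[-> ->] | [-> ->]].
have mUV z : measurable [set w | (U w, V w) = z].
  by rewrite UV_fiber; apply: measurableI.
rewrite (prob_preimage mUV (fun z => C z.1 z.2)).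
under [RHS]eq_bigr => x _ do rewrite (prob_preimage mV (C x)) mulr_sumr.
rewrite pair_big_dep; apply: eq_bigr => z _.
by rewrite UV_fiber UV_indep.
Qed.

End IndependentDiscreteRandomVariables.

Section MutualIndependence.
Context {K : finType}.

Lemma mutually_independent_setC1 (E : K -> set Omega) (k : K) :
  (forall x, measurable (E x)) -> mutually_independent P E ->
  mutually_independent P (fun x => if x == k then ~` E x else E x).
Proof.
move=> mE indE S.
have [kS | kNS] := boolP (k \in S); last first.
  have E'E x : x \in S -> (if x == k then ~` E x else E x) = E x.
    by move=> xS; rewrite ifN //; apply: contraNneq kNS => <-.
  rewrite (eq_bigr _ (fun x xS => congr1 (prob P) (E'E x xS))) -indE.
  by congr (prob P _); apply/seteqP; split=> w /= Ew x xS; have := Ew x xS;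
    rewrite E'E.
pose A := [set w | forall x, x \in S :\ k -> E x w].
have mA : measurable A by apply: measurable_forall_in.
have -> : [set w | forall x, x \in S -> (if x == k then ~` E x else E x) w] =
    A `\` E k.
  apply/seteqP; split=> w /=.
    move=> Ew; split=> [x|]; last by move: (Ew k kS); rewrite eqxx.
    by rewrite in_setD1 => /andP[/negbTE xk xS]; move: (Ew x xS); rewrite xk.
  move=> [Aw NEkw] x xS; case: eqP => [-> //|/eqP xk].
  by apply: Aw; rewrite in_setD1 xk.
rewrite probD //.
have -> : A `&` E k = [set w | forall x, x \in S -> E x w].
  apply/seteqP; split=> w /= => [[Aw Ekw] x xS | Ew].
    by case: (eqVneq x k) => [-> //|xk]; apply: Aw; rewrite in_setD1 xk.
  by split=> [x /setD1P[_ /Ew] //|]; exact: Ew.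
rewrite indE indE (big_setD1 k kS) (big_setD1 k kS) /= eqxx probC //.
rewrite [in RHS](eq_bigr (fun x => prob P (E x))); first by rewrite mulrBl mul1r.
by move=> x; rewrite in_setD1 => /andP[/negbTE ->].
Qed.

Lemma mutually_independent_setC (E : K -> set Omega) (T : {set K}) :
  (forall x, measurable (E x)) -> mutually_independent P E ->
  mutually_independent P (fun x => if x \in T then ~` E x else E x).
Proof.
move=> mE indE; rewrite (_ : T = [set x in enum T]); last first.
  by apply/setP => x; rewrite inE mem_enum.
elim: (enum T) => [|k t IH].
  by rewrite (_ : (fun x => _) = E) //; apply/funext => x; rewrite inE in_nil.
have [kt | kNt] := boolP (k \in t).
  rewrite (_ : (fun x => _) = fun x => if x \in [set x in t] then ~` E x else E x) //.
  by apply/funext => x; rewrite !inE; case: eqP => // ->; rewrite kt.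
pose F x := if x \in [set x in t] then ~` E x else E x.
have mF x : measurable (F x) by rewrite /F; case: ifP => _; [apply: measurableC|].
rewrite (_ : (fun x => _) = fun x => if x == k then ~` F x else F x).
  exact: mutually_independent_setC1.
apply/funext => x; rewrite /F !inE; case: eqP => [->|_] //.
by rewrite (negbTE kNt).
Qed.

Lemma prob_indep_setC (E : K -> set Omega) (S T : {set K}) :
  (forall x, measurable (E x)) -> mutually_independent P E -> [disjoint S & T]%B ->
  prob P [set w | (forall k, k \in S -> E k w) /\ (forall k, k \in T -> ~ E k w)] =
  \prod_(k in S) prob P (E k) * \prod_(k in T) (1 - prob P (E k)).
Proof.
move=> mE indE ST0.
have ST'N k : k \in S -> k \notin T by move=> kS; rewrite (disjointFr ST0 kS).
have := mutually_independent_setC _ T mE indE (S :|: T).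
rewrite (eq_bigl [predU S & T]) ?bigU //; last by move=> k; rewrite !inE.
have E'S : \prod_(k in S) prob P (if k \in T then ~` E k else E k) =
    \prod_(k in S) prob P (E k).
  by apply: eq_bigr => k /ST'N/negbTE ->.
have E'T : \prod_(k in T) prob P (if k \in T then ~` E k else E k) =
    \prod_(k in T) (1 - prob P (E k)).
  by apply: eq_bigr => k ->; rewrite probC.
rewrite E'S E'T.
move=> <-; congr (prob P _); apply/seteqP; split=> w /=.
  move=> [Sw Tw] k; rewrite inE => /orP[kS|kT]; last by rewrite kT; exact: Tw.
  by rewrite (negbTE (ST'N k kS)); apply: Sw.
move=> Ew; split=> k kST; have := Ew k; rewrite inE kST ?orbT => /(_ isT) //.
by rewrite (negbTE (ST'N k kST)).
Qed.

End MutualIndependence.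

End RealProbability.

Section OrdinalBigops.
Context {R : comRingType}.

Lemma sum_indicator (T : finType) (X : {set T}) :
  \sum_(j : T) ((j \in X)%:R : R) = #|X|%:R.
Proof.
rewrite -sum1_card natr_sum [RHS]big_mkcond; apply: eq_bigr => j _.
by case: (j \in X).
Qed.

Lemma sum_indicator_eq (n : nat) (l0 : 'I_n) :
  \sum_(l < n) ((l == l0)%:R : R) = 1.
Proof. by rewrite (bigD1 l0) //= eqxx big1 ?addr0 // => l /negbTE ->. Qed.

Lemma prod_if_eq (n : nat) (l0 : 'I_n) (a b : R) :
  \prod_(l < n) (if l == l0 then a else b) = a * b ^+ n.-1.
Proof.
rewrite (bigD1 l0) //= eqxx (eq_bigr (fun _ => b)); last by move=> l /negbTE ->.
by rewrite prodr_const cardC1 card_ord.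
Qed.

End OrdinalBigops.

Section MixedSupportModel.
Context {R : comRingType} {N In : nat} {L : finType}.
Variables (Jset : {set 'I_N}) (Iset : L -> {set 'I_N}).
Hypotheses (card_Iset : forall s, #|Iset s| = In)
  (Iset_J0 : forall s, Iset s :&: Jset = finset.set0)
  (Iset_disjoint : forall s t, s != t -> Iset s :&: Iset t = finset.set0).
(* [x] is the detection probability [1 - eps], [y] the false-alarm one [phi]. *)
Variables (x y : R).

Definition detect_prob (s : L) (j : 'I_N) : R :=
  if j \in Iset s :|: Jset then x else y.

Lemma notin_Iset_J {j} : j \in Jset -> forall s, j \notin Iset s.
Proof.
by move=> jJ s; apply/negP => js; move/setP: (Iset_J0 s) => /(_ j); rewrite !inE js jJ.
Qed.

Lemma in_Iset_owner {s j} : j \in Iset s -> forall t, (j \in Iset t) = (t == s).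
Proof.
move=> js t; apply/idP/eqP => [jt|-> //]; apply/eqP; apply: contraT => ts.
by move/setP: (Iset_disjoint _ _ ts) => /(_ j); rewrite !inE jt js.
Qed.

Lemma detect_prob_J s j : j \in Jset -> detect_prob s j = x.
Proof. by move=> jJ; rewrite /detect_prob finset.in_setU jJ orbT. Qed.

Lemma detect_prob_owner {s j} : j \notin Jset -> j \in Iset s ->
  forall t, detect_prob t j = if t == s then x else y.
Proof.
by move=> jJ js t; rewrite /detect_prob finset.in_setU (in_Iset_owner js) (negbTE jJ) orbF.
Qed.

Lemma detect_prob_free {t j} : j \notin Jset -> j \notin Iset t -> detect_prob t j = y.
Proof. by move=> jJ jt; rewrite /detect_prob finset.in_setU (negbTE jJ) (negbTE jt). Qed.

Context {h m : nat} (p : L) (q : 'I_h -> L) (r : 'I_m -> L).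
Hypotheses (q_inj : injective q) (r_inj : injective r)
  (qNp : forall l, q l != p) (rNp : forall l, r l != p)
  (qNr : forall l k, q l != r k).

Definition pattern_weight (j : 'I_N) : R :=
  detect_prob p j * \prod_(l < h) detect_prob (q l) j
  * \prod_(l < m) (1 - detect_prob (r l) j).

(* Weights of an index of J, of I_p or some I_(q l), of some I_(r l), and of
   no support of p, q or r. *)
Let wJ := x ^+ h.+1 * (1 - x) ^+ m.
Let wI := x * y ^+ h * (1 - y) ^+ m.
Let wR := (1 - x) * y ^+ h.+1 * (1 - y) ^+ m.-1.
Let w0 := y ^+ h.+1 * (1 - y) ^+ m.

Lemma pattern_weight_J j : j \in Jset -> pattern_weight j = wJ.
Proof.
move=> jJ; rewrite /pattern_weight detect_prob_J //.
under eq_bigr do rewrite detect_prob_J //.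
under [X in _ * X]eq_bigr do rewrite detect_prob_J //.
by rewrite !prodr_const !card_ord /wJ exprS.
Qed.

Lemma pattern_weight_p j : j \in Iset p -> pattern_weight j = wI.
Proof.
move=> jp; have jJ : j \notin Jset.
  by apply: contraTN jp => /notin_Iset_J /(_ p).
rewrite /pattern_weight (detect_prob_owner jJ jp) eqxx.
under eq_bigr do rewrite (detect_prob_owner jJ jp) (negbTE (qNp _)).
under [X in _ * X]eq_bigr do rewrite (detect_prob_owner jJ jp) (negbTE (rNp _)).
by rewrite !prodr_const !card_ord.
Qed.

Lemma pattern_weight_q {j l0} : j \in Iset (q l0) -> pattern_weight j = wI.
Proof.
move=> jq; have jJ : j \notin Jset.
  by apply: contraTN jq => /notin_Iset_J /(_ (q l0)).
have h_gt0 : (0 < h)%N by apply: leq_ltn_trans (ltn_ord l0).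
rewrite /pattern_weight (detect_prob_owner jJ jq) eq_sym (negbTE (qNp _)).
under eq_bigr do rewrite (detect_prob_owner jJ jq) (inj_eq q_inj).
under [X in _ * X]eq_bigr do rewrite (detect_prob_owner jJ jq) eq_sym (negbTE (qNr _ _)).
rewrite prod_if_eq prodr_const card_ord /wI.
by rewrite mulrCA -exprS prednK.
Qed.

Lemma pattern_weight_r {j l0} : j \in Iset (r l0) -> pattern_weight j = wR.
Proof.
move=> jr; have jJ : j \notin Jset.
  by apply: contraTN jr => /notin_Iset_J /(_ (r l0)).
rewrite /pattern_weight (detect_prob_owner jJ jr) eq_sym (negbTE (rNp _)).
under eq_bigr do rewrite (detect_prob_owner jJ jr) (negbTE (qNr _ _)).
under [X in _ * X]eq_bigr do rewrite (detect_prob_owner jJ jr) (inj_eq r_inj) (fun_if (fun z => 1 - z)).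
rewrite prod_if_eq prodr_const card_ord /wR.
by rewrite -exprS; ring.
Qed.

Lemma pattern_weight_free j : j \notin Jset -> j \notin Iset p ->
  (forall l, j \notin Iset (q l)) -> (forall l, j \notin Iset (r l)) ->
  pattern_weight j = w0.
Proof.
move=> jJ jp jq jr; rewrite /pattern_weight (detect_prob_free jJ jp).
under eq_bigr do rewrite (detect_prob_free jJ (jq _)).
under [X in _ * X]eq_bigr do rewrite (detect_prob_free jJ (jr _)).
by rewrite !prodr_const !card_ord /w0 exprS.
Qed.

Lemma pattern_weightE j : pattern_weight j =
  w0 + (wJ - w0) * (j \in Jset)%:R
  + (wI - w0) * ((j \in Iset p)%:R + \sum_(l < h) (j \in Iset (q l))%:R)
  + (wR - w0) * \sum_(l < m) (j \in Iset (r l))%:R.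
Proof.
have [jJ|jNJ] := boolP (j \in Jset).
  rewrite pattern_weight_J // (negbTE (notin_Iset_J jJ _)).
  rewrite !big1 => [|l _|l _]; rewrite ?(negbTE (notin_Iset_J jJ _)) //.
  by rewrite /=; ring.
have [jp|jNp] := boolP (j \in Iset p).
  rewrite pattern_weight_p // !big1 => [|l _|l _];
    rewrite ?(in_Iset_owner jp) ?(negbTE (qNp _)) ?(negbTE (rNp _)) //.
  by rewrite /=; ring.
case: (pickP (fun l => j \in Iset (q l))) => [l0 jq|jNq].
  rewrite (pattern_weight_q jq).
  under eq_bigr do rewrite (in_Iset_owner jq) (inj_eq q_inj).
  rewrite sum_indicator_eq big1 => [|l _]; last first.
    by rewrite (in_Iset_owner jq) eq_sym (negbTE (qNr _ _)).
  by rewrite /=; ring.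
case: (pickP (fun l => j \in Iset (r l))) => [l0 jr|jNr].
  rewrite (pattern_weight_r jr) big1 => [|l _]; last first.
    by rewrite (in_Iset_owner jr) (negbTE (qNr _ _)).
  under eq_bigr do rewrite (in_Iset_owner jr) (inj_eq r_inj).
  by rewrite sum_indicator_eq /=; ring.
have jNq' l : j \notin Iset (q l) by rewrite jNq.
have jNr' l : j \notin Iset (r l) by rewrite jNr.
rewrite pattern_weight_free // !big1 => [|l _|l _]; rewrite ?jNq ?jNr //=.
by ring.
Qed.

Lemma sum_pattern_weight : \sum_j pattern_weight j =
  wJ * #|Jset|%:R + wI * (h.+1 * In)%:R + wR * (m * In)%:R
  + w0 * (N%:R - #|Jset|%:R - ((m + h + 1) * In)%:R).
Proof.
have sum_sensors n (t : 'I_n -> L) :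
    \sum_(j < N) \sum_(l < n) ((j \in Iset (t l))%:R : R) = (n * In)%:R.
  rewrite exchange_big /= (eq_bigr (fun _ => In%:R)).
    by rewrite sumr_const card_ord natrM mulr_natl.
  by move=> l _; rewrite sum_indicator card_Iset.
under eq_bigr do rewrite pattern_weightE.
rewrite !big_split /= -!mulr_sumr !big_split /= !sum_sensors !sum_indicator.
rewrite card_Iset sumr_const card_ord !natrM !natrD.
by rewrite -mulr_natr -natr1 /w0; ring.
Qed.

Lemma sum_pattern_weight_support :
  \sum_(j in Iset p :|: Jset) pattern_weight j = wJ * #|Jset|%:R + wI * In%:R.
Proof.
have JpN : [disjoint Jset & Iset p]%B.
  by rewrite -setI_eq0 finset.setIC Iset_J0.
rewrite (eq_bigl [predU Jset & Iset p]) => [|j]; last by rewrite !inE orbC.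
rewrite bigU //=.
under eq_bigr => j jJ do rewrite pattern_weight_J //.
under [X in _ + X]eq_bigr => j jp do rewrite pattern_weight_p //.
by rewrite !sumr_const card_Iset !mulr_natr.
Qed.

End MixedSupportModel.

Section DetectionPattern.
Context {d : measure_display} {Omega : measurableType d} {R : realType}
  (P : probability Omega R).
Context {N : nat} {L : finType} (That : L -> Omega -> {set 'I_N}).
Hypothesis mThat : forall s A, measurable [set w | That s w = A].
Context {h m : nat} (p : L) (q : 'I_h -> L) (r : 'I_m -> L).

Definition pattern_event (j : 'I_N) : set Omega :=
  [set w | [/\ j \in That p w, forall l, j \in That (q l) w
             & forall l, j \notin That (r l) w]].

Definition detects_pattern (j : 'I_N) (f : {ffun L -> {set 'I_N}}) : bool :=
  [&& j \in f p, [forall l, j \in f (q l)] & [forall l, j \notin f (r l)]].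

Lemma detects_patternP j w :
  reflect (pattern_event j w) (detects_pattern j [ffun s => That s w]).
Proof.
rewrite /detects_pattern ffunE.
under eq_forallb do rewrite ffunE.
under [X in _ && (_ && X)]eq_forallb do rewrite ffunE.
by apply: (iffP and3P) => -[jp /forallP jq /forallP jr].
Qed.

Lemma pattern_eventE j :
  pattern_event j = [set w | detects_pattern j [ffun s => That s w]].
Proof. by apply/funext => w; apply/propext; apply: rwP; exact: detects_patternP. Qed.

Section DistinctSensors.
Hypotheses (q_inj : injective q) (r_inj : injective r)
  (qNp : forall l, q l != p) (rNp : forall l, r l != p)
  (qNr : forall l k, q l != r k).

Lemma prob_pattern_event j :
  mutually_independent P (fun s => [set w | j \in That s w]) ->
  prob P (pattern_event j) =
  prob P [set w | j \in That p w] * \prod_(l < h) prob P [set w | j \in That (q l) w]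
  * \prod_(l < m) (1 - prob P [set w | j \in That (r l) w]).
Proof.
move=> indep.
have mE s : measurable [set w | j \in That s w].
  exact: (measurable_preimage (mThat s) (fun A => j \in A)).
pose Q := [set q l | l : 'I_h]; pose T := [set r l | l : 'I_m].
have pNQ : p \notin Q by apply/imsetP => -[l _ pq]; move: (qNp l); rewrite pq eqxx.
have QT0 : [disjoint p |: Q & T]%B.
  rewrite -setI_eq0; apply/eqP/setP => s; rewrite !inE.
  apply/andP => -[/orP[/eqP-> | /imsetP[l _ ->]] /imsetP[k _ /eqP]].
    by rewrite eq_sym (negbTE (rNp k)).
  by rewrite (negbTE (qNr l k)).
have := prob_indep_setC P _ _ _ mE indep QT0.
rewrite big_setU1 //= !big_imset /=; [|by move=> ? ? _ _ /r_inj|by move=> ? ? _ _ /q_inj].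
rewrite (eq_bigl predT) => [|l]; last by rewrite inE.
rewrite [X in _ * X](eq_bigl predT) => [|l]; last by rewrite inE.
move=> <-; congr (prob P _); apply/seteqP; split=> w /=.
  move=> [jp jq jr]; split=> s.
    by rewrite !inE => /orP[/eqP -> // | /imsetP[l _ ->]].
  by move=> /imsetP[l _ ->]; apply/negP.
move=> [jQ jT]; split=> [|l|l].
- by apply: jQ; rewrite !inE eqxx.
- by apply: jQ; rewrite !inE; apply/orP; right; apply: imset_f.
- by apply/negP; apply: jT; apply: imset_f.
Qed.

End DistinctSensors.

Variable i : Omega -> 'I_N.
Hypotheses (m_i : forall j, measurable [set w | i w = j])
  (i_unif : forall j, prob P [set w | i w = j] = 1 / N%:R)
  (i_indep : forall j (f : L -> {set 'I_N}),
     prob P ([set w | i w = j] `&` [set w | forall s, That s w = f s])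
     = prob P [set w | i w = j] * prob P [set w | forall s, That s w = f s]).

Lemma prob_index_pattern_event (A : {set 'I_N}) :
  prob P ([set w | i w \in A] `&` [set w | pattern_event (i w) w]) =
  N%:R^-1 * \sum_(j in A) prob P (pattern_event j).
Proof.
have iZ_indep j f :
    prob P ([set w | i w = j] `&` [set w | [ffun s => That s w] = f]) =
    prob P [set w | i w = j] * prob P [set w | [ffun s => That s w] = f].
  by rewrite ffun_fiberE i_indep.
have -> : [set w | i w \in A] `&` [set w | pattern_event (i w) w] =
    [set w | (i w \in A) && detects_pattern (i w) [ffun s => That s w]].
  apply/funext => w; apply/propext.
  by rewrite /= -(rwP andP) -(rwP (detects_patternP _ w)).
rewrite (prob_preimage_indep P m_i (measurable_ffun_fiber _ mThat) iZ_indep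
  (fun j f => (j \in A) && detects_pattern j f)).
rewrite mulr_sumr [RHS]big_mkcond; apply: eq_bigr => j _.
rewrite i_unif div1r; case: (j \in A) => /=; first by rewrite pattern_eventE.
by rewrite (_ : [set w | false] = set0) ?prob0 ?mulr0 //; apply/seteqP; split.
Qed.

Lemma prob_index_pattern_eventT :
  prob P [set w | pattern_event (i w) w] =
  N%:R^-1 * \sum_j prob P (pattern_event j).
Proof.
have iT : [set w | i w \in [set: 'I_N]%SET] = setT.
  by apply/funext => w; apply/propext; rewrite /= finset.in_setT.
rewrite -[X in prob P X]setTI -iT prob_index_pattern_event.
by rewrite (eq_bigl xpredT) // => j; rewrite finset.in_setT.
Qed.

End DetectionPattern.

Theorem proposition4
  (d : measure_display) (Omega : measurableType d) (R : realType)
  (P : probability Omega R)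
  (N In Jn : nat) (L : finType)
  (Jset : {set 'I_N}) (Iset : L -> {set 'I_N})
  (eps : R)
  (i : Omega -> 'I_N) (That : L -> Omega -> {set 'I_N})
  (h m : nat) (p : L) (q : 'I_h -> L) (r : 'I_m -> L) :
  (* N > T >= 1, T = I + J *)
  (1 <= In + Jn)%N -> (In + Jn < N)%N ->
  (* mixed support-set model *)
  #|Jset| = Jn ->
  (forall s, #|Iset s| = In) ->
  (forall s, Iset s :&: Jset = finset.set0) ->
  (forall s t, s != t -> Iset s :&: Iset t = finset.set0) ->
  (* measurability of the random objects *)
  (forall j, measurable [set w | i w = j]) ->
  (forall s (A : {set 'I_N}), measurable [set w | That s w = A]) ->
  (* system model *)
  0 <= eps -> eps <= (N%:R - (In + Jn)%:R) / N%:R ->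
  (forall s j, j \in Iset s :|: Jset ->
     prob P [set w | j \in That s w] = 1 - eps) ->
  (forall s j, j \notin Iset s :|: Jset ->
     prob P [set w | j \in That s w] = (In + Jn)%:R / (N%:R - (In + Jn)%:R) * eps) ->
  (forall j, mutually_independent P (fun s => [set w | j \in That s w])) ->
  (* i uniform on Omega and independent of all estimates *)
  (forall j, prob P [set w | i w = j] = 1 / N%:R) ->
  (forall j (f : L -> {set 'I_N}),
     prob P ([set w | i w = j] `&` [set w | forall s, That s w = f s])
     = prob P [set w | i w = j] * prob P [set w | forall s, That s w = f s]) ->
  (* the 1+h+m sensors are distinct *)
  injective q -> injective r ->
  (forall l, q l != p) -> (forall l, r l != p) -> (forall l k, q l != r k) ->
  let B := [set w | [/\ i w \in That p w,
                        forall l, i w \in That (q l) w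
                      & forall l, i w \notin That (r l) w]] in
  0 < prob P B ->
  let phi := (In + Jn)%:R / (N%:R - (In + Jn)%:R) * eps in
  cond_prob P [set w | i w \in Iset p :|: Jset] B =
    ((1 - eps) ^+ h.+1 * eps ^+ m * (Jn%:R / N%:R)
       + (1 - eps) * phi ^+ h * (1 - phi) ^+ m * (In%:R / N%:R))
    / ((1 - eps) ^+ h.+1 * eps ^+ m * (Jn%:R / N%:R)
       + h.+1%:R * (1 - eps) * phi ^+ h * (1 - phi) ^+ m * (In%:R / N%:R)
       + m%:R * eps * phi ^+ h.+1 * (1 - phi) ^+ m.-1 * (In%:R / N%:R)
       + phi ^+ h.+1 * (1 - phi) ^+ m
           * ((N%:R - Jn%:R - (m + h + 1)%:R * In%:R) / N%:R)).
Proof.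
(* Numerator and denominator agree separately. *)
move=> _ _ card_J card_I IJ0 II0 m_i m_That _ _ hin hout indep i_unif i_indep
  q_inj r_inj qNp rNp qNr B _ phi.
have detectE s j :
    prob P [set w | j \in That s w] = detect_prob Jset Iset (1 - eps) phi s j.
  by rewrite /detect_prob; case: ifPn => js; [exact: hin | exact: hout].
have pattern_prob j : prob P (pattern_event That p q r j) =
    pattern_weight Jset Iset (1 - eps) phi p q r j.
  rewrite prob_pattern_event // /pattern_weight detectE.
  by congr (_ * _ * _); apply: eq_bigr => l _; rewrite detectE.
rewrite /cond_prob prob_index_pattern_event // prob_index_pattern_eventT //.
rewrite !(eq_bigr _ (fun j _ => pattern_prob j)).
rewrite (sum_pattern_weight_support _ _ card_I IJ0 II0) //.
rewrite (sum_pattern_weight _ _ card_I IJ0 II0) // card_J subKr.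
congr (_ / _); first by ring.
by rewrite !natrM -!natr1 !natrD; ring.
Qed.
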